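(* Let $G$ be a group acting specially on a quasi-median graph $X$ with finitely many orbits of vertices. Let $J$ be a hyperplane of $X$ and $C$ a clique of $X$ whose edges belong to $J$. Then $\mathrm{stab}_G(C)\leq \mathrm{stab}_G(J)$, the natural homomorphism $\mathrm{stab}_G(C)\to\mathfrak{S}(J)$ is injective, and its image has finite index in $\mathfrak{S}(J)$.
   Context: A connected simplicial graph $X$ is quasi-median if it contains neither $K_4^-$ (the complete graph on four vertices minus an edge) nor $K_{3,2}$ as an induced subgraph, and satisfies: (triangle condition) for all vertices $a,x,y$ with $x,y$ adjacent and $d(a,x)=d(a,y)$, there is a vertex $z$ adjacent to both $x,y$ with $d(a,z)=d(a,x)-1$; (quadrangle condition) for all vertices $a,x,y,z$ with $z$ adjacent to both $x$ and $y$ and $d(a,x)=d(a,y)=d(a,z)-1$, there is a vertex $w$ adjacent to both $x,y$ with $d(a,w)=d(a,z)-2$. A square is an induced 4-cycle; a clique is a maximal complete subgraph. A hyperplane is an equivalence class of edges for the transitive closure of the relation ''the two edges lie in a common triangle, or are opposite sides of a square''. The sectors of a hyperplane $J$ are the connected components of the graph obtained from $X$ by removing the interiors of all edges of $J$; $\mathscr{S}(J)$ denotes the set of sectors of $J$. The carrier $N(J)$ is the subgraph spanned by the edges of $J$. Two hyperplanes $J_1,J_2$ are transverse if there exist edges $e_1\in J_1$, $e_2 \in J_2$ which are two consecutive sides of a square; two distinct hyperplanes are tangent if they are not transverse and $N(J_1)\cap N(J_2)\neq\emptyset$. For a group $G$ acting by graph automorphisms on $X$, $\mathfrak{S}(J)$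 denotes the image of $\mathrm{stab}_G(J)$ in the permutation group of $\mathscr{S}(J)$. The action is hyperplane-special if it is faithful and: (1) for every hyperplane $J$ and every $g\in G$ with $gJ\neq J$, $J$ and $gJ$ are neither transverse nor tangent; (2) for all transverse hyperplanes $J_1,J_2$ and every $g\in G$, $J_1$ and $gJ_2$ are not tangent. The action is special if it is hyperplane-special and, for every hyperplane $J$, the action $\mathfrak{S}(J)\curvearrowright\mathscr{S}(J)$ is free. *)

From Stdlib Require Import Relations List.
Set Implicit Arguments.

Record Group := {
  gcar :> Type;
  gmul : gcar -> gcar -> gcar;
  ginv : gcar -> gcar;
  gone : gcar;
  gmulA : forall a b c, gmul a (gmul b c) = gmul (gmul a b) c;
  gmul1g : forall a, gmul gone a = a;
  gmulg1 : forall a, gmul a gone = a;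
  gmulVg : forall a, gmul (ginv a) a = gone;
  gmulgV : forall a, gmul a (ginv a) = gone
}.

Record Graph := {
  vert :> Type;
  adj : vert -> vert -> Prop;
  adj_sym : forall x y, adj x y -> adj y x;
  adj_irrefl : forall x, ~ adj x x
}.

Section GraphDefs.
Variable X : Graph.

Inductive walk : X -> X -> nat -> Prop :=
| walk0 : forall x, walk x x 0
| walkS : forall x y z n, adj X x y -> walk y z n -> walk x z (S n).

Definition dist (x y : X) (n : nat) : Prop :=
  walk x y n /\ forall m, walk x y m -> n <= m.

Definition connected : Prop := forall x y : X, exists n, walk x y n.

Definition has_induced_K4minus : Prop :=
  exists a b c d : X,
    a <> b /\ a <> c /\ a <> d /\ b <> c /\ b <> d /\ c <> d /\
    adj X a b /\ adj X a c /\ adj X a d /\ adj X b c /\ adj X b d /\ ~ adj X c d.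

Definition has_induced_K32 : Prop :=
  exists a1 a2 a3 b1 b2 : X,
    a1 <> a2 /\ a1 <> a3 /\ a2 <> a3 /\ a1 <> b1 /\ a1 <> b2 /\
    a2 <> b1 /\ a2 <> b2 /\ a3 <> b1 /\ a3 <> b2 /\ b1 <> b2 /\
    adj X a1 b1 /\ adj X a1 b2 /\ adj X a2 b1 /\ adj X a2 b2 /\
    adj X a3 b1 /\ adj X a3 b2 /\
    ~ adj X a1 a2 /\ ~ adj X a1 a3 /\ ~ adj X a2 a3 /\ ~ adj X b1 b2.

Definition triangle_condition : Prop :=
  forall a x y n, adj X x y -> dist a x n -> dist a y n ->
    exists z, adj X z x /\ adj X z y /\ dist a z (n - 1).

(* READING: x <> y is required *)
Definition quadrangle_condition : Prop :=
  forall a x y z n, x <> y -> adj X z x -> adj X z y ->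
    dist a x n -> dist a y n -> dist a z (S n) ->
    exists w, adj X w x /\ adj X w y /\ dist a w (n - 1).

Definition quasi_median : Prop :=
  connected /\ ~ has_induced_K4minus /\ ~ has_induced_K32 /\
  triangle_condition /\ quadrangle_condition.

Definition square (x1 x2 x3 x4 : X) : Prop :=
  x1 <> x2 /\ x1 <> x3 /\ x1 <> x4 /\ x2 <> x3 /\ x2 <> x4 /\ x3 <> x4 /\
  adj X x1 x2 /\ adj X x2 x3 /\ adj X x3 x4 /\ adj X x4 x1 /\
  ~ adj X x1 x3 /\ ~ adj X x2 x4.

(* edges are represented by ordered pairs (x,y) with x adjacent to y;
   (x,y) and (y,x) represent the same (unoriented) edge. *)
Definition edge (e : X * X) : Prop := adj X (fst e) (snd e).

Inductive hyp_step : X * X -> X * X -> Prop :=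
| hs_rev : forall x y, adj X x y -> hyp_step (x, y) (y, x)
| hs_tri : forall a b c, adj X a b -> adj X b c -> adj X a c ->
    hyp_step (a, b) (a, c)
| hs_sq : forall x1 x2 x3 x4, square x1 x2 x3 x4 ->
    hyp_step (x1, x2) (x4, x3).

Definition hyp_equiv : X * X -> X * X -> Prop := clos_refl_sym_trans _ hyp_step.

Definition is_hyperplane (J : X * X -> Prop) : Prop :=
  exists x y, adj X x y /\
    forall e, J e <-> (edge e /\ hyp_equiv (x, y) e).

Definition same_hyp (J1 J2 : X * X -> Prop) : Prop := forall e, J1 e <-> J2 e.

Definition transverse (J1 J2 : X * X -> Prop) : Prop :=
  exists x1 x2 x3 x4, square x1 x2 x3 x4 /\ J1 (x1, x2) /\ J2 (x2, x3).

Definition in_carrier (J : X * X -> Prop) (v : X) : Prop :=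
  exists w, J (v, w) \/ J (w, v).

Definition tangent (J1 J2 : X * X -> Prop) : Prop :=
  ~ same_hyp J1 J2 /\ ~ transverse J1 J2 /\
  exists v, in_carrier J1 v /\ in_carrier J2 v.

(* x and y lie in the same sector of J: connected in X minus the
   interiors of the edges of J *)
Definition same_sector (J : X * X -> Prop) : X -> X -> Prop :=
  clos_refl_sym_trans _ (fun x y => adj X x y /\ ~ J (x, y)).

Definition complete (C : X -> Prop) : Prop :=
  forall u v, C u -> C v -> u <> v -> adj X u v.

Definition clique (C : X -> Prop) : Prop :=
  complete C /\ forall v, (forall u, C u -> u <> v -> adj X u v) -> C v.

End GraphDefs.

Arguments walk {X}. Arguments dist {X}. Arguments square {X}. Arguments edge {X}.
Arguments hyp_step {X}. Arguments hyp_equiv {X}. Arguments is_hyperplane {X}.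
Arguments same_hyp {X}. Arguments transverse {X}. Arguments in_carrier {X}.
Arguments tangent {X}. Arguments same_sector {X}. Arguments complete {X}.
Arguments clique {X}.

Record Action (G : Group) (X : Graph) := {
  act :> G -> X -> X;
  act1 : forall x, act (gone G) x = x;
  actM : forall g h x, act (gmul G g h) x = act g (act h x);
  act_adj : forall g x y, adj X x y <-> adj X (act g x) (act g y)
}.

Section ActionDefs.
Variables (G : Group) (X : Graph) (A : Action G X).

Definition faithful : Prop := forall g, (forall x, A g x = x) -> g = gone G.

(* g J = { (g x, g y) | (x,y) in J } *)
Definition hyp_translate (g : G) (J : X * X -> Prop) : X * X -> Prop :=
  fun e => J (A (ginv G g) (fst e), A (ginv G g) (snd e)).

Definition stab_hyp (J : X * X -> Prop) (g : G) : Prop :=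
  same_hyp (hyp_translate g J) J.

Definition stab_set (C : X -> Prop) (g : G) : Prop :=
  forall v, C (A g v) <-> C v.

Definition hyperplane_special : Prop :=
  faithful /\
  (forall J g, is_hyperplane J -> ~ same_hyp (hyp_translate g J) J ->
     ~ transverse J (hyp_translate g J) /\ ~ tangent J (hyp_translate g J)) /\
  (forall J1 J2 g, is_hyperplane J1 -> is_hyperplane J2 -> transverse J1 J2 ->
     ~ tangent J1 (hyp_translate g J2)).

(* Elements of stab(J) act on the set of sectors of J by g.[x] = [g x].
   g and h induce the same element of the permutation group S(J) iff: *)
Definition same_on_sectors (J : X * X -> Prop) (g h : G) : Prop :=
  forall x, same_sector J (A g x) (A h x).

(* the action of S(J) on the sectors of J is free: an element of the image
   of stab(J) fixing one sector is the identity permutation *)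
Definition sectors_free (J : X * X -> Prop) : Prop :=
  forall g, stab_hyp J g -> (exists x, same_sector J (A g x) x) ->
    same_on_sectors J g (gone G).

Definition special : Prop :=
  hyperplane_special /\ forall J, is_hyperplane J -> sectors_free J.

Definition finitely_many_vertex_orbits : Prop :=
  exists l : list X, forall v : X, exists u g, In u l /\ v = A g u.

End ActionDefs.

(* Every vertex v has a unique gate on a clique C of a quasi-median graph: the
   vertex of C nearest to v, all other vertices of C being one step farther.
   Triangles and squares preserve whether the endpoints of an edge have
   distinct gates, and a ladder of squares joins every such edge to C; so the
   edges of the hyperplane J of C are exactly the edges whose endpoints have
   distinct gates, and two vertices of C never share a sector of J.  In a
   special action an element fixing a vertex is trivial.  So an element of
   stab(C) acting trivially on the sectors of J fixes C pointwise and is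
   trivial; and the gates on C of the vertices g^-1 x0 (x0 in C, g in
   stab(J)) lie in finitely many orbits, which yields finitely many cosets. *)
From Stdlib Require Import Relations List Lia PeanoNat Wf_nat Classical ClassicalEpsilon.

#[local] Arguments adj_sym {g x y} _.
#[local] Arguments walk0 {X} x.
#[local] Arguments walkS {X x y z n} _ _.

Set Implicit Arguments.
Unset Strict Implicit.

Lemma ex_least_nat (P : nat -> Prop) :
  (exists n, P n) -> exists n, P n /\ forall m, P m -> n <= m.
Proof.
  intro Ex.
  destruct (dec_inh_nat_subset_has_unique_least_element P (fun n => classic (P n)) Ex)
    as [n [[Pn Hmin] _]].
  eauto.
Qed.

Lemma finite_choice (T U : Type) (P : U -> Prop) (R : T -> U -> Prop) (l0 : list T) :
  exists l : list U, (forall h, In h l -> P h) /\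
    forall u, In u l0 -> (exists m, P m /\ R u m) -> exists h, In h l /\ P h /\ R u h.
Proof.
  induction l0 as [|u l0 [l [Hl Hchoice]]].
  - exists nil. split; intros; simpl in *; tauto.
  - destruct (classic (exists m, P m /\ R u m)) as [[m [Pm Rm]]|N].
    + exists (m :: l). split.
      * intros h [<-|I]; auto.
      * intros u' [<-|I] Ex; [exists m; simpl; auto|].
        destruct (Hchoice u' I Ex) as [h [Ih Hh]]. exists h; simpl; auto.
    + exists l. split; [exact Hl|]. intros u' [<-|I] Ex; [contradiction|auto].
Qed.

Section Distance.
Variable X : Graph.

Lemma walk_snoc (x y z : X) n : walk x y n -> adj X y z -> walk x z (S n).
Proof.
  intro W; revert z; induction W as [x|x y' w n Axy W IH]; intros z Ayz.
  - exact (walkS Ayz (walk0 z)).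
  - exact (walkS Axy (IH z Ayz)).
Qed.

Lemma walk_rev (x y : X) n : walk x y n -> walk y x n.
Proof.
  induction 1 as [x|x y' w n Axy W IH]; [constructor|].
  exact (walk_snoc IH (adj_sym Axy)).
Qed.

Lemma walk_cat (x y z : X) n m : walk x y n -> walk y z m -> walk x z (n + m).
Proof.
  induction 1 as [x|x y' w n Axy W IH]; intro W2; simpl; [exact W2|].
  exact (walkS Axy (IH W2)).
Qed.

Lemma adj_neq (x y : X) : adj X x y -> x <> y.
Proof. intros A E; subst; exact (adj_irrefl _ _ A). Qed.

Definition d (x y : X) : nat := epsilon (inhabits 0) (dist x y).

Hypothesis Hc : connected X.

Lemma d_spec (x y : X) : dist x y (d x y).
Proof.
  unfold d. apply epsilon_spec. destruct (ex_least_nat (Hc x y)) as [n [W Hmin]].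
  exists n; split; assumption.
Qed.

Lemma walk_d (x y : X) : walk x y (d x y).
Proof. apply d_spec. Qed.

Lemma d_le_walk (x y : X) m : walk x y m -> d x y <= m.
Proof. apply d_spec. Qed.

Lemma d_unique (x y : X) n : dist x y n -> d x y = n.
Proof.
  intros [W Hmin]. pose proof (d_le_walk W). pose proof (Hmin _ (walk_d x y)). lia.
Qed.

Lemma d_refl (x : X) : d x x = 0.
Proof. pose proof (d_le_walk (walk0 x)); lia. Qed.

Lemma d_eq0 (x y : X) : d x y = 0 -> x = y.
Proof. intro E. pose proof (walk_d x y) as W. rewrite E in W. now inversion W. Qed.

Lemma d_sym (x y : X) : d x y = d y x.
Proof.
  pose proof (d_le_walk (walk_rev (walk_d x y))).
  pose proof (d_le_walk (walk_rev (walk_d y x))). lia.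
Qed.

Lemma d_triangle (x y z : X) : d x z <= d x y + d y z.
Proof. apply d_le_walk, (walk_cat (walk_d x y) (walk_d y z)). Qed.

Lemma d_adj (x y : X) : adj X x y -> d x y = 1.
Proof.
  intro A. pose proof (d_le_walk (walkS A (walk0 y))).
  destruct (d x y) eqn:E; [|lia].
  apply d_eq0 in E. exfalso; exact (adj_neq A E).
Qed.

Lemma d_adj_le (a y z : X) : adj X y z -> d a z <= S (d a y).
Proof. intro A. pose proof (d_triangle a y z). rewrite (d_adj A) in H. lia. Qed.

Lemma d_pred (a y : X) n : d a y = S n -> exists y', adj X y' y /\ d a y' = n.
Proof.
  intro E. pose proof (walk_rev (walk_d a y)) as W. rewrite E in W.
  inversion W as [|y1 y' a1 n1 Ayy' W']; subst.
  exists y'. split; [exact (adj_sym Ayy')|].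
  pose proof (d_le_walk (walk_rev W')).
  pose proof (d_adj_le a (adj_sym Ayy')). lia.
Qed.

End Distance.

Section QuasiMedian.
Variable X : Graph.
Hypothesis QM : quasi_median X.
Let Hc : connected X := proj1 QM.

Lemma triangle_d (a x y : X) :
  adj X x y -> d a x = d a y -> exists z, adj X z x /\ adj X z y /\ d a z = d a x - 1.
Proof.
  intros A E. pose proof QM as [_ [_ [_ [T _]]]].
  destruct (T a x y (d a x) A (d_spec Hc a x)) as [z [Zx [Zy Dz]]];
    [rewrite E; apply d_spec; exact Hc|].
  exists z. rewrite (d_unique Hc Dz). auto.
Qed.

Lemma quadrangle_d (a x y z : X) :
  x <> y -> adj X z x -> adj X z y -> d a x = d a y -> d a z = S (d a x) ->
  exists w, adj X w x /\ adj X w y /\ d a w = d a x - 1.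
Proof.
  intros N Zx Zy Ex Ez. pose proof QM as [_ [_ [_ [_ Q]]]].
  destruct (Q a x y z (d a x) N Zx Zy (d_spec Hc a x)) as [w [Wx [Wy Dw]]].
  - rewrite Ex; apply d_spec; exact Hc.
  - rewrite <- Ez; apply d_spec; exact Hc.
  - exists w. rewrite (d_unique Hc Dw). auto.
Qed.

(* Two vertices whose distances to a common base point differ by two are
   distinct and non-adjacent; this settles the side conditions of the
   configurations (squares, K4^-, K3,2) built below. *)
Ltac solve_neq := let E := fresh in intro E; subst;
  first [ exfalso; eapply adj_irrefl; eassumption | congruence | lia ].

Ltac solve_nonadj := let H := fresh in intro H;
  match goal with E : d ?a _ = _ |- _ =>
    pose proof (d_adj_le Hc a H); pose proof (d_adj_le Hc a (adj_sym H)); lia end.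

Ltac solve_config := first [ assumption | apply adj_sym; assumption | solve_neq | solve_nonadj
  | let H := fresh in intro H; apply adj_sym in H; auto; fail ].

Definition is_gate (K : X -> Prop) (v g : X) : Prop :=
  K g /\ forall c, K c -> c <> g -> d c v = S (d g v).

Lemma clique_inhabited (K : X -> Prop) (v : X) : clique K -> exists c, K c.
Proof.
  intros [_ Kmax]. apply NNPP; intro N. apply N. exists v.
  apply Kmax. intros u Ku. exfalso; eauto.
Qed.

Lemma clique_nonmember (K : X -> Prop) (z : X) :
  clique K -> ~ K z -> exists u, K u /\ u <> z /\ ~ adj X u z.
Proof.
  intros [_ Kmax] N. apply NNPP; intro N2. apply N, Kmax. intros u Ku Nu.
  apply NNPP; intro N3. eauto.
Qed.

Lemma gate_exists (K : X -> Prop) (v : X) : clique K -> exists g, is_gate K v g.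
Proof.
  intros CK. pose proof QM as [_ [NK4 _]].
  destruct (ex_least_nat (P := fun n => exists c, K c /\ d c v = n)) as [m [[g [Kg Eg]] Hmin]].
  { destruct (clique_inhabited v CK) as [c Kc]. eauto. }
  exists g. split; [exact Kg|]. intros c Kc Ncg.
  assert (Agc : adj X g c) by (apply (proj1 CK); auto).
  pose proof (d_adj_le Hc v Agc) as Hcv.
  rewrite (d_sym Hc v c), (d_sym Hc v g) in Hcv.
  pose proof (Hmin _ (ex_intro _ c (conj Kc eq_refl))).
  destruct (Nat.eq_dec (d c v) m) as [E|E]; [exfalso|lia].
  destruct m as [|m].
  - apply d_eq0 in E; apply d_eq0 in Eg; auto. subst. auto.
  (* a common neighbour z of g and c closer to v lies outside K, and with a
     vertex u of K not adjacent to z it spans an induced K4^- *)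
  - destruct (triangle_d (a:=v) Agc) as [z [Zg [Zc Dz]]];
      [rewrite (d_sym Hc v g), (d_sym Hc v c); lia|].
    assert (NKz : ~ K z).
    { intro Kz. pose proof (Hmin _ (ex_intro _ z (conj Kz eq_refl))).
      rewrite (d_sym Hc v g) in Dz. rewrite (d_sym Hc z v) in *. lia. }
    destruct (clique_nonmember CK NKz) as [u [Ku [Nuz Auz]]].
    assert (u <> g) by (intro; subst; apply Auz; apply adj_sym; auto).
    assert (u <> c) by (intro; subst; apply Auz; apply adj_sym; auto).
    apply NK4. exists g, c, z, u.
    repeat split; try (apply (proj1 CK); auto; fail); auto; try (apply adj_sym; auto);
      try (apply adj_neq; apply adj_sym; auto; fail).
    all: intro; apply Auz; apply adj_sym; auto.
Qed.

Lemma gate_unique (K : X -> Prop) (v g1 g2 : X) :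
  is_gate K v g1 -> is_gate K v g2 -> g1 = g2.
Proof.
  intros [K1 H1] [K2 H2]. apply NNPP; intro N.
  pose proof (H1 g2 K2 (fun E => N (eq_sym E))). pose proof (H2 g1 K1 N). lia.
Qed.

Lemma gate_member (K : X -> Prop) (v : X) : clique K -> K v -> is_gate K v v.
Proof.
  intros CK Kv. split; [exact Kv|]. intros c Kc N.
  rewrite (d_refl Hc). apply (d_adj Hc). apply (proj1 CK); auto.
Qed.

Lemma gate_of_member (K : X -> Prop) (v g : X) : clique K -> K v -> is_gate K v g -> g = v.
Proof. intros CK Kv Gv. exact (gate_unique Gv (gate_member CK Kv)). Qed.

Definition separated (K : X -> Prop) (e : X * X) : Prop :=
  forall g1 g2, is_gate K (fst e) g1 -> is_gate K (snd e) g2 -> g1 <> g2.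

Lemma separated_edge_d (K : X -> Prop) (u v p q : X) :
  adj X u v -> is_gate K u p -> is_gate K v q -> p <> q ->
  d p u = d q v /\ d q u = S (d p u) /\ d p v = S (d q v).
Proof.
  intros A [Kp Gp] [Kq Gq] N.
  pose proof (Gp q Kq (fun E => N (eq_sym E))). pose proof (Gq p Kp N).
  pose proof (d_adj_le Hc p A). pose proof (d_adj_le Hc q (adj_sym A)). lia.
Qed.

(* Moving u one step towards p, the quadrangle condition closes a square
   whose opposite side is again such an edge, one step closer to (p, q). *)
Lemma hyp_equiv_of_ladder (p q : X) : adj X p q ->
  forall k (u v : X), adj X u v -> d p u = k -> d q v = k -> d q u = S k -> d p v = S k ->
  hyp_equiv (p, q) (u, v).
Proof.
  intro Apq. induction k; intros u v Auv E1 E2 E3 E4.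
  - apply d_eq0 in E1; apply d_eq0 in E2; auto. subst. apply rst_refl.
  - destruct (d_pred Hc E1) as [u' [Au'u Du']].
    assert (Dqu' : d q u' = S k).
    { pose proof (d_triangle Hc q p u'). rewrite (d_sym Hc q p), (d_adj Hc Apq) in H.
      pose proof (d_adj_le Hc q Au'u). lia. }
    assert (u' <> v) by solve_neq.
    destruct (quadrangle_d (a:=q) H (adj_sym Au'u) Auv) as [w [Wu' [Wv Dw]]]; try lia.
    assert (Dpw : d p w = S k).
    { pose proof (d_adj_le Hc p Wv). pose proof (d_adj_le Hc p (adj_sym Wu')). lia. }
    assert (Sq : square u v w u') by (repeat split; solve_config).
    eapply rst_trans; [apply (IHk u' w (adj_sym Wu')); lia|].
    apply rst_sym, rst_step, hs_sq, Sq.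
Qed.

Lemma separated_triangle (K : X -> Prop) (a b c pa pb pc : X) :
  adj X a b -> adj X b c -> adj X a c -> is_gate K a pa -> is_gate K b pb -> is_gate K c pc ->
  pa <> pb -> pa <> pc.
Proof.
  intros Aab Abc Aac Ga Gb Gc N E. subst pc. pose proof QM as [_ [NK4 _]].
  destruct (separated_edge_d (adj_sym Abc) Gc Gb N) as [S1 [S2 S3]].
  destruct (separated_edge_d Aab Ga Gb N) as [T1 [T2 T3]].
  destruct (triangle_d (a:=pa) Aac) as [z [Za [Zc Dz]]]; [lia|].
  destruct (d pa a) eqn:Ea.
  - assert (Dc : d pa c = 0) by lia.
    apply d_eq0 in Ea; [|exact Hc]. apply d_eq0 in Dc; [|exact Hc]. subst.
    exact (adj_irrefl _ _ Aac).
  - apply NK4. exists a, c, z, b. repeat split; solve_config.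
Qed.

Lemma nonadjacent_flip_absurd (x y y' r p : X) k :
  adj X x y -> adj X x y' -> y <> y' -> ~ adj X y y' -> adj X p r ->
  d r y = k -> d r y' = k -> d r x = S k -> d p x = k -> d p y = S k -> d p y' = S k -> False.
Proof.
  intros A1 A2 N NA Apr E1 E2 E3 E4 E5 E6. pose proof QM as [_ [NK4 [NK32 _]]].
  destruct k as [|k].
  - apply d_eq0 in E1; apply d_eq0 in E2; auto. congruence.
  - destruct (quadrangle_d (a:=r) N A1 A2) as [w [W1 [W2 W3]]]; try lia.
    assert (Dpw : d p w = S k).
    { pose proof (d_triangle Hc p r w). rewrite (d_adj Hc Apr) in H.
      pose proof (d_adj_le Hc p W2). lia. }
    assert (x <> w) by solve_neq.
    assert (~ adj X x w) by solve_nonadj.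
    destruct (quadrangle_d (a:=p) H (adj_sym A1) (adj_sym W1)) as [w' [V1 [V2 V3]]]; try lia.
    apply NK32. exists w', y, y', x, w. repeat split; solve_config.
Qed.

Lemma square_gates_not_pqqq (K : X -> Prop) (x1 x2 x3 x4 p q : X) :
  square x1 x2 x3 x4 ->
  is_gate K x1 p -> is_gate K x2 q -> is_gate K x3 q -> is_gate K x4 q -> p <> q -> False.
Proof.
  intros Sq G1 G2 G3 G4 Npq. pose proof QM as [_ [NK4 [NK32 _]]].
  destruct Sq as [n12 [n13 [n14 [n23 [n24 [n34 [a12 [a23 [a34 [a41 [na13 na24]]]]]]]]]]].
  destruct (separated_edge_d a12 G1 G2 Npq) as [S1 [S2 S3]].
  destruct (separated_edge_d a41 G4 G1 (not_eq_sym Npq)) as [T1 [T2 T3]].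
  remember (d p x1) as k eqn:Ek. destruct k as [|k].
  - assert (D2 : d q x2 = 0) by lia. assert (D4 : d q x4 = 0) by lia.
    apply d_eq0 in D2; apply d_eq0 in D4; auto. congruence.
  - destruct (quadrangle_d (a:=q) n24 a12 (adj_sym a41)) as [w [W1 [W2 W3]]]; try lia.
    destruct (classic (w = x3)) as [Ew|Nw].
    + subst w. destruct G3 as [Kq G3]. destruct G1 as [Kp _].
      pose proof (G3 p Kp Npq).
      destruct (quadrangle_d (a:=p) n13 (adj_sym a12) a23) as [w' [V1 [V2 V3]]]; try lia.
      apply NK32. exists w', x2, x4, x1, x3. repeat split; solve_config.
    + destruct (classic (adj X w x3)) as [Aw|NAw].
      * apply NK4. exists w, x3, x2, x4. repeat split; solve_config.
      * apply NK32. exists w, x1, x3, x2, x4. repeat split; solve_config.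
Qed.

Lemma square_gates_not_pqrr (K : X -> Prop) (x1 x2 x3 x4 p q r : X) :
  clique K -> square x1 x2 x3 x4 ->
  is_gate K x1 p -> is_gate K x2 q -> is_gate K x3 r -> is_gate K x4 r ->
  p <> q -> r <> p -> r <> q -> False.
Proof.
  intros CK Sq G1 G2 G3 G4 Npq Nrp Nrq. pose proof QM as [_ [NK4 _]].
  destruct Sq as [n12 [n13 [n14 [n23 [n24 [n34 [a12 [a23 [a34 [a41 [na13 na24]]]]]]]]]]].
  destruct (separated_edge_d a12 G1 G2 Npq) as [S1 [S2 S3]].
  destruct (separated_edge_d a41 G4 G1 Nrp) as [T1 [T2 T3]].
  remember (d p x1) as k eqn:Ek.
  assert (Dr2 : d r x2 = S (d q x2)) by (apply (proj2 G2); auto; apply (proj1 G3)).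
  destruct (triangle_d (a:=r) a12) as [y [Y1 [Y2 Y3]]]; try lia.
  assert (y <> x4) by (intro; subst; apply na24; apply adj_sym; auto).
  assert (~ adj X y x4).
  { intro A. apply NK4. exists x1, y, x2, x4. repeat split; solve_config. }
  destruct (gate_exists y CK) as [gy [Kgy Gy]].
  assert (Dpy : d p y = S k).
  { pose proof (d_adj_le Hc p Y2). pose proof (d_adj_le Hc p (adj_sym Y1)).
    destruct (Nat.eq_dec (d p y) k) as [E|E]; [exfalso|lia].
    destruct (classic (gy = p)) as [->|Ngp].
    - pose proof (Gy r (proj1 G3) Nrp). lia.
    - destruct (classic (gy = r)) as [->|Ngr].
      + pose proof (Gy p (proj1 G1) (not_eq_sym Nrp)). lia.
      + pose proof (Gy p (proj1 G1) (not_eq_sym Ngp)).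
        pose proof ((proj2 G1) gy Kgy Ngp).
        pose proof (d_adj_le Hc gy Y1). lia. }
  apply (nonadjacent_flip_absurd (x:=x1) (y:=y) (y':=x4) (r:=r) (p:=p) (k:=k)); auto; try lia.
  all: try (apply adj_sym; assumption).
  apply (proj1 CK); [apply (proj1 G1)|apply (proj1 G3)|auto].
Qed.

Lemma square_swap (x1 x2 x3 x4 : X) : square x1 x2 x3 x4 -> square x2 x1 x4 x3.
Proof.
  intros [n12 [n13 [n14 [n23 [n24 [n34 [a12 [a23 [a34 [a41 [na13 na24]]]]]]]]]]].
  repeat split; try (apply adj_sym; assumption); try assumption; try (intro; subst; auto; fail);
    intro H; apply adj_sym in H; auto.
Qed.

Lemma square_reverse (x1 x2 x3 x4 : X) : square x1 x2 x3 x4 -> square x4 x3 x2 x1.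
Proof.
  intros [n12 [n13 [n14 [n23 [n24 [n34 [a12 [a23 [a34 [a41 [na13 na24]]]]]]]]]]].
  repeat split; try (apply adj_sym; assumption); try assumption; try (intro; subst; auto; fail);
    intro H; apply adj_sym in H; auto.
Qed.

Lemma separated_square (K : X -> Prop) (x1 x2 x3 x4 p q r : X) :
  clique K -> square x1 x2 x3 x4 ->
  is_gate K x1 p -> is_gate K x2 q -> is_gate K x3 r -> is_gate K x4 r -> p <> q -> False.
Proof.
  intros CK Sq G1 G2 G3 G4 Npq.
  destruct (classic (r = p)) as [->|Nrp]; [|destruct (classic (r = q)) as [->|Nrq]].
  - exact (square_gates_not_pqqq (square_swap Sq) G2 G1 G4 G3 (not_eq_sym Npq)).
  - exact (square_gates_not_pqqq Sq G1 G2 G3 G4 Npq).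
  - exact (square_gates_not_pqrr CK Sq G1 G2 G3 G4 Npq Nrp Nrq).
Qed.

Lemma separated_hyp_step (K : X -> Prop) (e e' : X * X) :
  clique K -> hyp_step e e' -> (separated K e <-> separated K e').
Proof.
  intros CK St. destruct St as [x y A|a b c Aab Abc Aac|x1 x2 x3 x4 Sq]; unfold separated; simpl.
  - split; intros H g1 g2 G1 G2 E; exact (H g2 g1 G2 G1 (eq_sym E)).
  - split; intros H g1 g2 G1 G2.
    + destruct (gate_exists b CK) as [gb Gb].
      exact (separated_triangle Aab Abc Aac G1 Gb G2 (H _ _ G1 Gb)).
    + destruct (gate_exists c CK) as [gc Gc].
      exact (separated_triangle Aac (adj_sym Abc) Aab G1 Gc G2 (H _ _ G1 Gc)).
  - split; intros H g1 g2 G1 G2 E; subst g2.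
    + destruct (gate_exists x1 CK) as [p Gp]. destruct (gate_exists x2 CK) as [q Gq].
      exact (separated_square CK Sq Gp Gq G2 G1 (H _ _ Gp Gq)).
    + destruct (gate_exists x4 CK) as [p Gp]. destruct (gate_exists x3 CK) as [q Gq].
      exact (separated_square CK (square_reverse Sq) Gp Gq G2 G1 (H _ _ Gp Gq)).
Qed.

Lemma separated_hyp_equiv (K : X -> Prop) (e e' : X * X) :
  clique K -> hyp_equiv e e' -> (separated K e <-> separated K e').
Proof.
  intros CK H. induction H as [e e' St| | |]; [exact (separated_hyp_step CK St)|tauto..].
Qed.

Lemma clique_other (K : X -> Prop) (x0 y0 c : X) :
  adj X x0 y0 -> clique K -> K c -> exists c', K c' /\ c' <> c.
Proof.
  intros A CK Kc.
  assert (Nc : exists w, adj X c w).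
  { destruct (Hc c x0) as [n W]. inversion W; subst; eauto. }
  destruct Nc as [w Aw].
  apply NNPP; intro N. apply N. exists w. split; [|exact (not_eq_sym (adj_neq Aw))].
  apply (proj2 CK). intros u Ku Nu. destruct (classic (u = c)) as [->|Nuc]; [exact Aw|].
  exfalso; eauto.
Qed.

Definition edges_in (K : X -> Prop) (J : X * X -> Prop) : Prop :=
  forall x y, K x -> K y -> adj X x y -> J (x, y).

Section CliqueInHyperplane.
Variables (K : X -> Prop) (J : X * X -> Prop).
Hypotheses (HJ : is_hyperplane J) (CK : clique K) (KJ : edges_in K J).

Lemma separated_edge_in_hyp (u v p q : X) :
  adj X u v -> is_gate K u p -> is_gate K v q -> p <> q -> J (u, v).
Proof.
  intros Auv Gu Gv N. destruct HJ as [x0 [y0 [_ DefJ]]].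
  destruct (separated_edge_d Auv Gu Gv N) as [S1 [S2 S3]].
  assert (Apq : adj X p q) by (apply (proj1 CK); auto; [apply (proj1 Gu)|apply (proj1 Gv)]).
  assert (Jpq : J (p, q)) by (apply KJ; auto; [apply (proj1 Gu)|apply (proj1 Gv)]).
  apply DefJ in Jpq as [_ Epq]. apply DefJ. split; [exact Auv|].
  exact (rst_trans _ _ _ _ _ Epq (hyp_equiv_of_ladder Apq Auv eq_refl (eq_sym S1) S2 ltac:(lia))).
Qed.

Lemma hyp_edge_separated (u v : X) : J (u, v) -> separated K (u, v).
Proof.
  intros Juv. destruct HJ as [x0 [y0 [A0 DefJ]]].
  destruct (clique_inhabited x0 CK) as [c1 K1].
  destruct (clique_other A0 CK K1) as [c2 [K2 N]].
  assert (J21 : J (c2, c1)) by (apply KJ; auto; apply (proj1 CK); auto).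
  destruct (proj1 (DefJ _) J21) as [_ E21]. destruct (proj1 (DefJ _) Juv) as [_ Euv].
  apply (separated_hyp_equiv CK (rst_trans _ _ _ _ _ (rst_sym _ _ _ _ E21) Euv)).
  intros g1 g2 G1 G2. simpl in G1, G2.
  rewrite (gate_of_member CK K2 G1), (gate_of_member CK K1 G2). exact N.
Qed.

Lemma same_sector_gate (a b ga gb : X) :
  same_sector J a b -> is_gate K a ga -> is_gate K b gb -> ga = gb.
Proof.
  intros SS. revert ga gb.
  induction SS as [x y [A NJ]|x|x y S IH|x y z S1 IH1 S2 IH2]; intros ga gb Ga Gb.
  - apply NNPP; intro N. exact (NJ (separated_edge_in_hyp A Ga Gb N)).
  - exact (gate_unique Ga Gb).
  - symmetry; auto.
  - destruct (gate_exists y CK) as [gy Gy]. transitivity gy; auto.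
Qed.

Lemma same_sector_gate_self (v g : X) : is_gate K v g -> same_sector J v g.
Proof.
  remember (d g v) as n eqn:E. revert v E. induction n; intros v E G.
  - apply eq_sym, d_eq0 in E; [subst; apply rst_refl|exact Hc].
  - destruct (d_pred Hc (eq_sym E)) as [v' [A D]].
    assert (G' : is_gate K v' g).
    { destruct (gate_exists v' CK) as [s Gs].
      destruct (classic (s = g)) as [->|Nsg]; [exact Gs|exfalso].
      pose proof ((proj2 Gs) g (proj1 G) (fun E => Nsg (eq_sym E))).
      pose proof ((proj2 G) s (proj1 Gs) Nsg).
      pose proof (d_adj_le Hc s A). lia. }
    refine (rst_trans _ _ _ _ _ _ (IHn v' (eq_sym D) G')).
    apply rst_step. split; [exact (adj_sym A)|].
    intro Jvv'. exact (hyp_edge_separated Jvv' G G' eq_refl).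
Qed.

Lemma edges_in_clique_incl (K' : X -> Prop) (b : X) :
  clique K' -> edges_in K' J -> K b -> K' b -> forall v, K' v -> K v.
Proof.
  intros CK' KJ' Kb Kb' v Kv.
  destruct (classic (v = b)) as [->|Nvb]; [exact Kb|].
  assert (A : adj X b v) by (apply (proj1 CK'); auto).
  apply NNPP; intro NK.
  destruct (gate_exists v CK) as [g Gv].
  assert (g = b).
  { apply NNPP; intro Ngb. pose proof ((proj2 Gv) b Kb (fun E => Ngb (eq_sym E))) as D.
    rewrite (d_adj Hc A) in D. assert (D0 : d g v = 0) by lia.
    apply d_eq0 in D0; [subst; exact (NK (proj1 Gv))|exact Hc]. }
  subst g.
  exact (hyp_edge_separated (KJ' b v Kb' Kv A) (gate_member CK Kb) Gv eq_refl).
Qed.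

End CliqueInHyperplane.

Definition edge_clique (x y : X) (v : X) : Prop :=
  v = x \/ v = y \/ (adj X x v /\ adj X y v).

Lemma edge_clique_adj (x y z : X) : adj X x y -> edge_clique x y z -> z <> x -> adj X x z.
Proof. intros A [E|[E|[A1 A2]]] N; subst; auto. congruence. Qed.

Lemma edge_clique_clique (x y : X) : adj X x y -> clique (edge_clique x y).
Proof.
  intros A. pose proof QM as [_ [NK4 _]]. split.
  - intros a b Ta Tb N.
    destruct Ta as [->|[->|[Ax Ay]]]; destruct Tb as [->|[->|[Bx By]]]; try congruence;
      try (apply adj_sym; assumption); try assumption.
    apply NNPP; intro NA. apply NK4. exists x, y, a, b.
    repeat split; try assumption; try (apply adj_neq; assumption);
      try (intro; subst; exact (adj_irrefl _ _ Ay)); intro; subst; exact (adj_irrefl _ _ By).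
  - intros v H. destruct (classic (v = x)) as [->|Nx]; [left; auto|].
    destruct (classic (v = y)) as [->|Ny]; [right; left; auto|].
    right; right. split; apply H; unfold edge_clique; auto.
Qed.

Lemma edge_clique_edges_in (x y : X) :
  adj X x y -> edges_in (edge_clique x y) (fun e => edge e /\ hyp_equiv (x, y) e).
Proof.
  intros A.
  assert (HX : forall z, edge_clique x y z -> z <> x -> hyp_equiv (x, y) (x, z)).
  { intros z [E|[E|[A1 A2]]] N; subst; [congruence|apply rst_refl|].
    apply rst_step, hs_tri; auto. }
  intros a b Ta Tb Ad. split; [exact Ad|].
  destruct (classic (a = x)) as [->|Na]; [exact (HX b Tb (not_eq_sym (adj_neq Ad)))|].
  refine (rst_trans _ _ _ _ _ (HX a Ta Na) _).
  assert (Axa : adj X x a) by exact (edge_clique_adj A Ta Na).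
  assert (Eax : hyp_equiv (x, a) (a, x)) by (apply rst_step, hs_rev; exact Axa).
  destruct (classic (b = x)) as [->|Nb]; [exact Eax|].
  refine (rst_trans _ _ _ _ _ Eax _).
  apply rst_step, hs_tri; [exact (adj_sym Axa)|exact (edge_clique_adj A Tb Nb)|exact Ad].
Qed.
End QuasiMedian.

Section Action.
Variables (G : Group) (X : Graph) (A : Action G X).

Lemma act_inv_l (g : G) (x : X) : A (ginv G g) (A g x) = x.
Proof. rewrite <- actM, gmulVg, act1. reflexivity. Qed.

Lemma act_inv_r (g : G) (x : X) : A g (A (ginv G g) x) = x.
Proof. rewrite <- actM, gmulgV, act1. reflexivity. Qed.

Definition preserves_hyp (J : X * X -> Prop) (g : G) : Prop :=
  forall x y, J (A g x, A g y) <-> J (x, y).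

Lemma stab_hyp_preserves (J : X * X -> Prop) (g : G) : stab_hyp A J g <-> preserves_hyp J g.
Proof.
  unfold stab_hyp, preserves_hyp, same_hyp, hyp_translate. split.
  - intros H x y. rewrite <- (H (A g x, A g y)). simpl. rewrite !act_inv_l. tauto.
  - intros H [x y]. simpl. rewrite <- (H (A (ginv G g) x) (A (ginv G g) y)), !act_inv_r. tauto.
Qed.

Lemma preserves_hyp_inv (J : X * X -> Prop) (g : G) :
  preserves_hyp J g -> preserves_hyp J (ginv G g).
Proof. intros H x y. rewrite <- (H (A (ginv G g) x) (A (ginv G g) y)), !act_inv_r. tauto. Qed.

Lemma preserves_hyp_mul (J : X * X -> Prop) (g h : G) :
  preserves_hyp J g -> preserves_hyp J h -> preserves_hyp J (gmul G g h).
Proof. intros Hg Hh x y. rewrite !actM, (Hg (A h x) (A h y)). exact (Hh x y). Qed.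

Lemma same_sector_act (J : X * X -> Prop) (g : G) (a b : X) :
  preserves_hyp J g -> same_sector J a b -> same_sector J (A g a) (A g b).
Proof.
  intros P S. induction S as [x y [Ad NJ]|x|x y S IH|x y z S1 IH1 S2 IH2].
  - apply rst_step. split; [exact (proj1 (act_adj A g x y) Ad)|]. intro Jg. exact (NJ (proj1 (P x y) Jg)).
  - apply rst_refl.
  - apply rst_sym; exact IH.
  - exact (rst_trans _ _ _ _ _ IH1 IH2).
Qed.

Lemma stab_set_inv (C : X -> Prop) (g : G) : stab_set A C g -> stab_set A C (ginv G g).
Proof. intros H v. rewrite <- (H (A (ginv G g) v)), act_inv_r. tauto. Qed.

Lemma clique_act (C : X -> Prop) (g : G) : clique C -> clique (fun v => C (A g v)).
Proof.
  intros [Ccomp Cmax]. split.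
  - intros a b Ca Cb N. apply (act_adj A g). apply Ccomp; auto.
    intro E; apply N. rewrite <- (act_inv_l g a), E. apply act_inv_l.
  - intros v H. apply Cmax. intros w Cw Nw.
    assert (Ad : adj X (A (ginv G g) w) v).
    { apply H; [rewrite act_inv_r; exact Cw|]. intro E. apply Nw. rewrite <- E. symmetry. apply act_inv_r. }
    apply (act_adj A g) in Ad. rewrite act_inv_r in Ad. exact Ad.
Qed.

Lemma edges_in_act (C : X -> Prop) (J : X * X -> Prop) (g : G) :
  edges_in C J -> preserves_hyp J g -> edges_in (fun v => C (A g v)) J.
Proof. intros CJ P a b Ca Cb Ad. apply P, CJ; auto. exact (proj1 (act_adj A g a b) Ad). Qed.

(* g J and J are neither transverse nor tangent unless equal, so a vertex
   in both carriers forces g J = J *)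
Lemma stab_hyp_of_carrier (J : X * X -> Prop) (g : G) (v w w' : X) :
  hyperplane_special A -> is_hyperplane J ->
  J (v, w) -> J (A (ginv G g) v, A (ginv G g) w') -> stab_hyp A J g.
Proof.
  intros [_ [Hsp _]] HJ Jw Jw'. apply NNPP; intro N.
  destruct (Hsp J g HJ N) as [NT NTa]. apply NTa.
  split; [exact (fun S => N (fun e => iff_sym (S e)))|]. split; [exact NT|].
  exists v. split; [exists w; left; exact Jw|exists w'; left; exact Jw'].
Qed.

End Action.

Section SpecialAction.
Variables (G : Group) (X : Graph) (A : Action G X).
Hypotheses (QM : quasi_median X) (SP : special A).

(* k stabilises the hyperplane H of the edge xy (x is in the carriers of H
   and k H) and fixes the sector of x, hence, the action on sectors being
   free, all sectors of H; so y and k y have the same gate y on the clique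
   of xy, which forces k y = y. *)
Lemma special_fix_adj (k : G) (x y : X) : A k x = x -> adj X x y -> A k y = y.
Proof.
  intros Fx Axy. pose proof QM as [Hc _].
  set (H := fun e : X * X => edge e /\ hyp_equiv (x, y) e).
  assert (HH : is_hyperplane H) by (exists x, y; split; [exact Axy|intro e; reflexivity]).
  assert (Hxy : H (x, y)) by (split; [exact Axy|apply rst_refl]).
  assert (Fx' : A (ginv G k) x = x) by (rewrite <- Fx at 1; apply act_inv_l).
  assert (St : stab_hyp A H k).
  { apply (stab_hyp_of_carrier (v:=x) (w:=y) (w':=A k y) (proj1 SP) HH Hxy).
    rewrite Fx', act_inv_l. exact Hxy. }
  assert (Sy : same_sector H (A k y) y).
  { assert (Sx : exists z, same_sector H (A k z) z) by (exists x; rewrite Fx; apply rst_refl).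
    pose proof (proj2 SP H HH k St Sx y) as Sy. rewrite act1 in Sy. exact Sy. }
  pose proof (edge_clique_clique QM Axy) as CT.
  assert (Ty : edge_clique x y y) by (right; left; reflexivity).
  destruct (gate_exists QM (A k y) CT) as [g Gg].
  pose proof (same_sector_gate QM HH CT (edge_clique_edges_in Axy) Sy Gg (gate_member QM CT Ty)).
  subst g.
  assert (Axky : adj X x (A k y)) by (rewrite <- Fx at 1; exact (proj1 (act_adj A k x y) Axy)).
  pose proof ((proj2 Gg) x (or_introl eq_refl) (adj_neq Axy)) as D.
  rewrite (d_adj Hc Axky) in D.
  symmetry. apply (d_eq0 Hc). lia.
Qed.

Lemma special_fix_trivial (k : G) (x : X) : A k x = x -> k = gone G.
Proof.
  intro Fx. apply (proj1 (proj1 SP)). intro v.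
  destruct (proj1 QM x v) as [n W]. revert Fx.
  induction W as [x|x y z n Axy W IH]; intro Fx; [exact Fx|].
  exact (IH (special_fix_adj Fx Axy)).
Qed.

Section CliqueStabiliser.
Variables (J : X * X -> Prop) (C : X -> Prop).
Hypotheses (HJ : is_hyperplane J) (CL : clique C) (CJ : edges_in C J).

Lemma stab_set_stab_hyp (g : G) : stab_set A C g -> stab_hyp A J g.
Proof.
  intro Sg. destruct HJ as [x0 [y0 [A0 _]]].
  destruct (clique_inhabited x0 CL) as [c1 C1].
  destruct (clique_other QM A0 CL C1) as [c2 [C2 N]].
  pose proof (stab_set_inv Sg) as Sg'.
  assert (A12 : adj X c1 c2) by exact (proj1 CL c1 c2 C1 C2 (not_eq_sym N)).
  apply (stab_hyp_of_carrier (v:=c1) (w:=c2) (w':=c2) (proj1 SP) HJ).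
  - exact (CJ C1 C2 A12).
  - apply CJ; [apply Sg'; exact C1|apply Sg'; exact C2|].
    exact (proj1 (act_adj A (ginv G g) c1 c2) A12).
Qed.

Lemma stab_set_sectors_inj (g h : G) :
  stab_set A C g -> stab_set A C h -> same_on_sectors A J g h -> g = h.
Proof.
  intros Sg Sh SS.
  set (k := gmul G (ginv G h) g).
  assert (Ph : preserves_hyp A J (ginv G h)).
  { apply preserves_hyp_inv, stab_hyp_preserves, stab_set_stab_hyp, Sh. }
  destruct HJ as [x0 _]. destruct (clique_inhabited x0 CL) as [c Cc].
  assert (Ckc : C (A k c)) by (unfold k; rewrite actM; apply (stab_set_inv Sh), Sg, Cc).
  assert (Skc : same_sector J (A k c) c).
  { pose proof (same_sector_act Ph (SS c)) as S. rewrite act_inv_l in S.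
    unfold k. rewrite actM. exact S. }
  assert (Fkc : A k c = c).
  { exact (same_sector_gate QM HJ CL CJ Skc (gate_member QM CL Ckc) (gate_member QM CL Cc)). }
  pose proof (special_fix_trivial Fkc) as E. unfold k in E.
  rewrite <- (gmul1g G g), <- (gmulgV G h), <- gmulA, E, gmulg1. reflexivity.
Qed.

Lemma stab_of_clique_vertex_map (n : G) (y y' : X) :
  C y -> C y' -> A n y' = y -> stab_hyp A J n /\ stab_set A C n.
Proof.
  intros Cy Cy' E. destruct HJ as [x0 [y0 [A0 _]]].
  destruct (clique_other QM A0 CL Cy) as [c [Cc Nc]].
  destruct (clique_other QM A0 CL Cy') as [c' [Cc' Nc']].
  assert (St : stab_hyp A J n).
  { apply (stab_hyp_of_carrier (v:=y) (w:=c) (w':=A n c') (proj1 SP) HJ).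
    - exact (CJ Cy Cc (proj1 CL y c Cy Cc (not_eq_sym Nc))).
    - rewrite <- E, !act_inv_l. exact (CJ Cy' Cc' (proj1 CL y' c' Cy' Cc' (not_eq_sym Nc'))). }
  split; [exact St|].
  (* C and n C are cliques with edges in J through the common vertex y *)
  set (nC := fun v => C (A (ginv G n) v)).
  assert (CnC : clique nC) by exact (clique_act A (ginv G n) CL).
  assert (Pn : preserves_hyp A J (ginv G n)).
  { apply preserves_hyp_inv, stab_hyp_preserves, St. }
  assert (nCJ : edges_in nC J) by exact (edges_in_act CJ Pn).
  assert (nCy : nC y) by (unfold nC; rewrite <- E, act_inv_l; exact Cy').
  intro v. split; intro Hv.
  - pose proof (edges_in_clique_incl QM HJ CnC nCJ CL CJ nCy Cy Hv) as H.
    unfold nC in H. rewrite act_inv_l in H. exact H.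
  - apply (edges_in_clique_incl QM HJ CL CJ CnC nCJ Cy nCy).
    unfold nC. rewrite act_inv_l. exact Hv.
Qed.

(* Fix x0 in C.  For g in stab(J), the gate of g^-1 x0 on C lies in one of
   finitely many orbits; pick one h per orbit.  If the gates y of g^-1 x0 and
   y' of h^-1 x0 satisfy n y' = y, then n stabilises C, and g n h^-1 fixes
   the sector of x0 (every vertex lies in the sector of its gate), so by
   freeness it acts trivially on sectors. *)
Lemma stab_set_finite_index :
  finitely_many_vertex_orbits A ->
  exists l : list G,
    (forall h, In h l -> stab_hyp A J h) /\
    forall g, stab_hyp A J g ->
      exists h c, In h l /\ stab_set A C c /\ same_on_sectors A J g (gmul G h c).
Proof.
  intros [l0 Hl0]. destruct HJ as [x' _]. destruct (clique_inhabited x' CL) as [x0 Cx0].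
  destruct (finite_choice (stab_hyp A J)
     (fun u m => exists y k, is_gate C (A (ginv G m) x0) y /\ y = A k u) l0) as [l [Hl Hchoice]].
  exists l. split; [exact Hl|]. intros g Sg.
  destruct (gate_exists QM (A (ginv G g) x0) CL) as [y Gy].
  destruct (Hl0 y) as [u [k [Iu Eu]]].
  destruct (Hchoice u Iu (ex_intro _ g (conj Sg (ex_intro _ y (ex_intro _ k (conj Gy Eu))))))
    as [h [Ih [Sh [y' [k' [Gy' Ey']]]]]].
  set (n := gmul G k (ginv G k')).
  assert (En : A n y' = y) by (unfold n; rewrite actM, Ey', act_inv_l; symmetry; exact Eu).
  destruct (stab_of_clique_vertex_map (proj1 Gy) (proj1 Gy') En) as [Sn Cn].
  apply stab_hyp_preserves in Sg, Sh, Sn.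
  pose proof (same_sector_gate_self QM HJ CL CJ Gy) as S1.
  pose proof (same_sector_gate_self QM HJ CL CJ Gy') as S2.
  pose proof (same_sector_act Sn S2) as S3. rewrite En in S3.
  pose proof (same_sector_act Sg (rst_trans _ _ _ _ _ S3 (rst_sym _ _ _ _ S1))) as S4.
  rewrite act_inv_r in S4.
  set (f := gmul G (gmul G g n) (ginv G h)).
  assert (Pf : preserves_hyp A J f).
  { apply preserves_hyp_mul; [apply preserves_hyp_mul|apply preserves_hyp_inv]; assumption. }
  assert (Ex : exists z, same_sector J (A f z) z).
  { exists x0. unfold f. rewrite !actM. exact S4. }
  pose proof (proj2 SP J HJ f (proj2 (stab_hyp_preserves A J f) Pf) Ex) as Ff.
  exists h, (ginv G n). split; [exact Ih|]. split; [exact (stab_set_inv Cn)|].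
  intro x. specialize (Ff (A h (A (ginv G n) x))). rewrite act1 in Ff. unfold f in Ff.
  rewrite !actM, act_inv_l, act_inv_r in Ff. rewrite actM. exact Ff.
Qed.

End CliqueStabiliser.
End SpecialAction.

Theorem proposition3p3 (G : Group) (X : Graph) (A : Action G X)
  (J : X * X -> Prop) (C : X -> Prop) :
  quasi_median X ->
  special A ->
  finitely_many_vertex_orbits A ->
  is_hyperplane J ->
  clique C ->
  (forall x y, C x -> C y -> adj X x y -> J (x, y)) ->
  (forall g, stab_set A C g -> stab_hyp A J g) /\
  (forall g h, stab_set A C g -> stab_set A C h ->
     same_on_sectors A J g h -> g = h) /\
  (* finite index: finitely many cosets h Im cover S(J) *)
  (exists l : list (gcar G),
     (forall h, In h l -> stab_hyp A J h) /\
     forall g, stab_hyp A J g ->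
       exists h c, In h l /\ stab_set A C c /\
         same_on_sectors A J g (gmul G h c)).
Proof.
  intros QM SP FO HJ CL CJ. split; [|split].
  - exact (stab_set_stab_hyp QM SP HJ CL CJ).
  - exact (stab_set_sectors_inj QM SP HJ CL CJ).
  - exact (stab_set_finite_index QM SP HJ CL CJ FO).
Qed.
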